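(* Let $\varepsilon>0$, $\beta>0$ and let $\alpha$ be a sufficiently large constant. Let $d$ be large, and let $\mathcal{G}$ be a graph on $\alpha d$ vertices with $\Delta(\mathcal{G})\le\beta\delta(\mathcal{G})$ and $\delta(\mathcal{G})>d^{\varepsilon}$; set $p^-=\delta(\mathcal{G})/(\alpha d)$. Let $G$ be a bipartite graph with stable sets $X$ and $Y$ and maximum degree $d$. Let $\chi$ be a random coloring of $Y$ in which each vertex independently receives a color chosen uniformly at random from $V(\mathcal{G})$. For $x\in X$ and $c\in V(\mathcal{G})$ let $W_{x,c}$ be the number of $y\in N_G(x)$ such that (1) $y$ is the only vertex of color $\chi(y)$ in $N_G(x)$; (2) $\mathbf{Bad}(y,\chi,G)\leq d/\sqrt{\alpha}$; and (3) $c\,\chi(y)\in E(\mathcal{G})$. If $x\in X$ satisfies $d\leq 2d_G(x)$, then for every $c\in V(\mathcal{G})$, $$\Pr\left(W_{x,c}\leq \frac{p^- d_G(x)}{2}\right)=e^{-\Omega(\delta(\mathcal{G}))}.$$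
   Context: For a graph $G$, a partial vertex coloring $\chi$ of $G$ and a colored vertex $v$, $\mathbf{Bad}(v,\chi,G)$ is the number of vertices $u\in N_G(v)$ for which there exists $v'\in N_G(u)$ with $v'\neq v$ and $\chi(v')=\chi(v)$ (i.e. the color of $v$ appears more than once in $N_G(u)$). $N_G(v)$ is the neighbourhood and $d_G(v)$ the degree of $v$ in $G$. Asymptotic notation is as $d\to\infty$ with $\alpha,\beta,\varepsilon$ fixed. *)

From mathcomp Require Import all_boot.
From Stdlib Require Import Reals.

Set Implicit Arguments.
Unset Strict Implicit.
Unset Printing Implicit Defensive.

Definition Rleb (a b : R) : bool := if Rle_dec a b then true else false.

Section Graphs.
Variable T : finType.
Definition simple_graph (g : rel T) := symmetric g /\ irreflexive g.

Definition nbhd (g : rel T) (v : T) : {set T} := [set u | g v u].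
Definition deg (g : rel T) (v : T) : nat := #|nbhd g v|.

(* minimum / maximum degree (the graph has at least one vertex when used) *)
Definition mindeg (g : rel T) : nat := \big[minn/#|T|]_(v : T) deg g v.
Definition maxdeg (g : rel T) : nat := \max_(v : T) deg g v.

Definition bipartition (g : rel T) (X Y : {set T}) : Prop :=
  [disjoint X & Y] /\ X :|: Y = setT /\
  (forall u v, u \in X -> v \in X -> ~~ g u v) /\
  (forall u v, u \in Y -> v \in Y -> ~~ g u v).

Variable C : finType.

(* partial colorings: chi v = None means v is uncolored *)
Definition Bad (g : rel T) (chi : {ffun T -> option C}) (v : T) : nat :=
  #|[set u in nbhd g v |
      [exists v', [&& v' \in nbhd g u, v' != v, chi v' != None &
                      chi v' == chi v]]]|.

Definition colorings_of (Y : {set T}) : {set {ffun T -> option C}} :=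
  [set chi : {ffun T -> option C} | [forall v, (chi v != None) == (v \in Y)]].

Definition W (eG : rel C) (g : rel T) (alpha : R) (d : nat)
    (chi : {ffun T -> option C}) (x : T) (c : C) : nat :=
  #|[set y in nbhd g x |
      match chi y with
      | Some col =>
          [&& [forall y', (y' \in nbhd g x) ==> (chi y' == Some col) ==> (y' == y)],
              Rleb (INR (Bad g chi y)) (INR d / sqrt alpha) &
              eG c col]
      | None => false
      end]|.

Definition uprob (S : finType) (Om : {set S}) (P : pred S) : R :=
  (INR #|[set s in Om | P s]| / INR #|Om|)%R.
End Graphs.

(* Let S be the neighbourhood of c in the colour graph and call y in N(x) a
   hit if its colour lies in S.  The number of hits has mean
   Q = |S| d(x) / (alpha d) >= delta / (2 alpha).  A hit not counted by W
   either shares its colour with an earlier or with a later neighbour of x,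
   or has more than d / sqrt alpha bad neighbours; since its colour is unique
   in N(x), the latter are caused by equally coloured vertices outside N(x),
   and are charged to paths of length two from N(x) to those vertices.  So
   W <= Q / 2 forces one of six deviations: few hits, many hits, many
   repeats (in either order), a large outside weight, or many bad hits.  Each
   has probability exp(-Omega(Q)): revealing the colours one vertex at a
   time, a product of factors that depend only on the revealed colours and
   have conditional mean at most 1 has mean at most 1, which gives
   Chernoff-type bounds by Markov's inequality. *)

From HB Require Import structures.
From mathcomp Require Import all_boot.
From Stdlib Require Import Reals Lra.

Set Implicit Arguments.
Unset Strict Implicit.
Unset Printing Implicit Defensive.

HB.instance Definition _ := Monoid.isComLaw.Build R R0 Rplus
  (fun x y z => esym (Rplus_assoc x y z)) Rplus_comm Rplus_0_l.
HB.instance Definition _ := Monoid.isComLaw.Build R R1 Rmult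
  (fun x y z => esym (Rmult_assoc x y z)) Rmult_comm Rmult_1_l.
HB.instance Definition _ := Monoid.isMulLaw.Build R R0 Rmult Rmult_0_l Rmult_0_r.
HB.instance Definition _ := Monoid.isAddLaw.Build R Rmult Rplus
  Rmult_plus_distr_r Rmult_plus_distr_l.

Section RealBig.
Variable I : Type.
Implicit Types (r : seq I) (P : pred I).

Lemma Rsum_le r P (F G : I -> R) : (forall i, P i -> F i <= G i)%R ->
  (\big[Rplus/R0]_(i <- r | P i) F i <= \big[Rplus/R0]_(i <- r | P i) G i)%R.
Proof. by move=> H; elim/big_ind2: _ => [|*|]; [lra | lra | auto]. Qed.

Lemma Rsum_ge0 r P (F : I -> R) : (forall i, P i -> 0 <= F i)%R ->
  (0 <= \big[Rplus/R0]_(i <- r | P i) F i)%R.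
Proof. by move=> H; elim/big_ind: _ => [|*|]; [lra | lra | auto]. Qed.

Lemma Rprod_ge0 r P (F : I -> R) : (forall i, P i -> 0 <= F i)%R ->
  (0 <= \big[Rmult/R1]_(i <- r | P i) F i)%R.
Proof. by move=> H; elim/big_ind: _ => [|*|]; [lra | exact: Rmult_le_pos | auto]. Qed.

Lemma Rprod_le r P (F G : I -> R) : (forall i, P i -> 0 <= F i <= G i)%R ->
  (\big[Rmult/R1]_(i <- r | P i) F i <= \big[Rmult/R1]_(i <- r | P i) G i)%R.
Proof.
move=> H; suff [] : (0 <= \big[Rmult/R1]_(i <- r | P i) F i
                       <= \big[Rmult/R1]_(i <- r | P i) G i)%R by [].
elim/big_ind2: _ => [| x1 x2 y1 y2 [? ?] [? ?] | //]; first lra.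
by split; [exact: Rmult_le_pos | apply: Rmult_le_compat; lra].
Qed.

Lemma Rprod_exp r P (F : I -> R) :
  \big[Rmult/R1]_(i <- r | P i) exp (F i) = exp (\big[Rplus/R0]_(i <- r | P i) F i).
Proof. by elim/big_rec2: _ => [|i x y _ ->]; rewrite ?exp_0 ?exp_plus. Qed.

Lemma Rsum_opp r P (F : I -> R) :
  \big[Rplus/R0]_(i <- r | P i) (- F i)%R = (- \big[Rplus/R0]_(i <- r | P i) F i)%R.
Proof. by elim/big_rec2: _ => [|i x y _ ->]; ring. Qed.

Lemma INR_sum r P (F : I -> nat) :
  INR (\sum_(i <- r | P i) F i) = \big[Rplus/R0]_(i <- r | P i) INR (F i).
Proof. by elim/big_rec2: _ => [|i x y _ <-] //; rewrite plus_INR. Qed.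
End RealBig.

Lemma Rsum_const (I : finType) (P : pred I) (a : R) :
  \big[Rplus/R0]_(i | P i) a = (INR #|P| * a)%R.
Proof. by rewrite -sum1_card INR_sum big_distrl; apply: eq_bigr => i _ /=; ring. Qed.

Lemma Rsum_indicator (I : finType) (P : pred I) :
  \big[Rplus/R0]_(i : I) (if P i then R1 else R0) = INR #|[set i | P i]|.
Proof.
rewrite -big_mkcond Rsum_const Rmult_1_r.
by congr INR; apply: eq_card => i; rewrite inE.
Qed.

Lemma exp_le x y : (x <= y)%R -> (exp x <= exp y)%R.
Proof. by case/Rle_lt_or_eq_dec => [/exp_increasing|->]; lra. Qed.

Lemma exp_Ropp_mul x : (exp x * exp (- x) = 1)%R.
Proof. by rewrite -exp_plus Rplus_opp_r exp_0. Qed.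

Lemma one_plus_mul_exp_opp_le1 x : ((1 + x) * exp (- x) <= 1)%R.
Proof. have := exp_ineq1_le x; have := exp_Ropp_mul x; have := exp_pos (- x); nra. Qed.

Lemma exp_half_le y : (0 <= y <= 1)%R -> (exp (y / 2) <= 1 + y)%R.
Proof.
move=> Hy; have := exp_ineq1_le (- (y / 2)).
have := exp_Ropp_mul (y / 2); have := exp_pos (y / 2); nra.
Qed.

Lemma RlebP a b : reflect (a <= b)%R (Rleb a b).
Proof. by rewrite /Rleb; case: Rle_dec => H; constructor. Qed.

Lemma Rleb_false a b : ~~ Rleb a b -> (b < a)%R.
Proof. by move/RlebP/Rnot_le_lt. Qed.

Definition fupd (I C : finType) (f : {ffun I -> C}) (i : I) (c : C) : {ffun I -> C} :=
  [ffun j => if j == i then c else f j].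

Definition agree_off (I C : finType) (J : {set I}) (f f0 : {ffun I -> C}) :=
  [forall j, (j \notin J) ==> (f j == f0 j)].

(* Sequentially revealing coordinates in the order [r], a product of
   nonnegative factors, each determined by the coordinates revealed so far
   and of conditional mean at most 1, has mean at most 1. *)
Section Supermartingale.
Variables (I C : finType) (r : I -> nat) (G : I -> {ffun I -> C} -> R).
Hypothesis r_inj : injective r.
Hypothesis G_ge0 : forall i f, (0 <= G i f)%R.
Hypothesis G_adapted : forall i (f f' : {ffun I -> C}),
  (forall j, r j <= r i -> f j = f' j) -> G i f = G i f'.
Hypothesis G_mean : forall i f, (\big[Rplus/R0]_(c : C) G i (fupd f i c) <= INR #|C|)%R.

Lemma sum_prod_agree_off_le n (J : {set I}) f0 : #|J| = n ->
  (\big[Rplus/R0]_(f | agree_off J f f0) \big[Rmult/R1]_(i in J) G i f <= INR #|C| ^ n)%R.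
Proof.
elim: n J f0 => [|n IH] J f0 HJ.
  have J0 : J = set0 by apply/eqP; rewrite -cards_eq0 HJ.
  rewrite (eq_bigl (pred1 f0)) => [|f]; first by rewrite big_pred1_eq J0 big_set0 /=; lra.
  rewrite /agree_off J0; apply/forallP/eqP => [Hf|->]; last first.
    by move=> j; rewrite eqxx implybT.
  by apply/ffunP => j; apply/eqP; move: (Hf j); rewrite in_set0.
have [i0 Hi0] : exists i0, i0 \in J by apply/card_gt0P; rewrite HJ.
have [im Him Hmax] := arg_maxnP r Hi0.
have {}Him : im \in J := Him.
have {}Hmax : forall j, j \in J -> r j <= r im := Hmax.
set J' := J :\ im.
have HJ' : #|J'| = n by move: HJ; rewrite (cardsD1 im J) Him => [[]].
have r_lt : forall i, i \in J' -> r i < r im.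
  move=> i; rewrite in_setD1 => /andP [Hne HiJ]; rewrite ltn_neqAle Hmax // andbT.
  by apply: contra Hne => /eqP /r_inj ->.
(* split f into its restriction off [im] and its value at [im] *)
rewrite (reindex_onto (fun p : {ffun I -> C} * C => fupd p.1 im p.2)
                      (fun f => (fupd f im (f0 im), f im))); last first.
  by move=> f _; apply/ffunP => j; rewrite !ffunE; case: (j =P im) => [->|].
rewrite (eq_bigl (fun p => agree_off J' p.1 f0 && true)); last first.
  case=> f c /=; apply/idP/idP.
  - case/andP=> /forallP Ha /eqP [Ef _]; rewrite ?andbT.
    apply/forallP => j; apply/implyP => Hj.
    case: (j =P im) => [->|/eqP Hne]; first by rewrite -Ef ffunE eqxx.
    move: (Ha j); rewrite ffunE (negbTE Hne) /= => /implyP; apply.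
    by move: Hj; rewrite in_setD1 Hne.
  - rewrite ?andbT => /forallP Ha; apply/andP; split.
      apply/forallP => j; apply/implyP => Hj.
      have Hne : j != im by apply: contraNneq Hj => ->.
      by rewrite ffunE (negbTE Hne); apply: (implyP (Ha j)); rewrite in_setD1 Hne.
    rewrite xpair_eqE; apply/andP; split; last by rewrite ffunE eqxx.
    apply/eqP/ffunP => j; rewrite !ffunE.
    case: (j =P im) => [->|] //.
    by move: (Ha im); rewrite in_setD1 eqxx /= => /eqP.
rewrite -(pair_big_dep (fun f => agree_off J' f f0) (fun _ _ => true)
            (fun f c => \big[Rmult/R1]_(i in J) G i (fupd f im c))) /=.
apply: (Rle_trans _ (\big[Rplus/R0]_(f | agree_off J' f f0)
                       (INR #|C| * \big[Rmult/R1]_(i in J') G i f))%R); last first.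
  rewrite -big_distrr /=; apply: Rmult_le_compat_l; [exact: pos_INR | exact: IH].
apply: Rsum_le => f _.
have split_im c : \big[Rmult/R1]_(i in J) G i (fupd f im c)
                  = (G im (fupd f im c) * \big[Rmult/R1]_(i in J') G i f)%R.
  rewrite (bigD1 im) //=; congr Rmult.
  apply: eq_big => [i|i Hi]; first by rewrite in_setD1 andbC.
  apply: G_adapted => j Hj; rewrite ffunE; case: (j =P im) => [Ej|//].
  by have := r_lt i; rewrite in_setD1 andbC Hi -Ej ltnNge Hj => /(_ isT).
rewrite (eq_bigr _ (fun c _ => split_im c)) -big_distrl /=.
by apply: Rmult_le_compat_r; [apply: Rprod_ge0 => *; exact: G_ge0 | exact: G_mean].
Qed.

Lemma sum_prod_adapted_le (c0 : C) :
  (\big[Rplus/R0]_(f : {ffun I -> C}) \big[Rmult/R1]_(i : I) G i f <= INR #|C| ^ #|I|)%R.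
Proof.
have := sum_prod_agree_off_le [ffun => c0] (cardsT I).
rewrite (eq_bigl predT) => [|f]; last by apply/forallP => j; rewrite in_setT.
by rewrite (eq_bigr (fun f => \big[Rmult/R1]_(i : I) G i f)) // => f _;
  apply: eq_bigl => i; rewrite in_setT.
Qed.

Lemma card_event_le (c0 : C) (E : pred {ffun I -> C}) (M : R) : (0 <= M)%R ->
  (forall f, E f -> M <= \big[Rmult/R1]_(i : I) G i f)%R ->
  (INR #|[set f | E f]| * M <= INR #|C| ^ #|I|)%R.
Proof.
move=> M0 HM; apply: Rle_trans (sum_prod_adapted_le c0).
rewrite (bigID E) /= -[X in (X <= _)%R]Rplus_0_r; apply: Rplus_le_compat.
  rewrite (eq_card (A := [set f | E f]) (B := E)) => [|f]; last by rewrite inE.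
  by rewrite -Rsum_const; exact: Rsum_le.
by apply: Rsum_ge0 => f _; apply: Rprod_ge0 => *; exact: G_ge0.
Qed.
End Supermartingale.

(* Exponential supermartingale for the number of adapted events [P i], with a
   compensator [h i] known strictly before [i]. *)
Section ExpCount.
Variables (I C : finType) (r : I -> nat) (c0 : C).
Variables (P : I -> {ffun I -> C} -> bool) (h : I -> {ffun I -> C} -> R) (th : R).
Hypothesis r_inj : injective r.
Hypothesis P_adapted : forall i (f f' : {ffun I -> C}),
  (forall j, r j <= r i -> f j = f' j) -> P i f = P i f'.
Hypothesis h_predictable : forall i (f f' : {ffun I -> C}),
  (forall j, r j < r i -> f j = f' j) -> h i f = h i f'.
Hypothesis h_compensates : forall i f,
  ((INR #|C| + (exp th - 1) * INR #|[set c | P i (fupd f i c)]|) * exp (- h i f)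
     <= INR #|C|)%R.

Lemma card_event_exp_count_le (E : pred {ffun I -> C}) (M : R) :
  (forall f, E f -> M <= th * INR #|[set i | P i f]| - \big[Rplus/R0]_(i : I) h i f)%R ->
  (INR #|[set f | E f]| * exp M <= INR #|C| ^ #|I|)%R.
Proof.
move=> HM.
pose G i f := exp (th * (if P i f then R1 else R0) - h i f).
apply: (card_event_le (r := r) (G := G)) => //.
- by move=> i f; left; apply: exp_pos.
- move=> i f f' H; rewrite /G (P_adapted H) (h_predictable (f' := f')) // => j Hj.
  exact/H/ltnW.
- move=> i f.
  have Gfupd c : G i (fupd f i c) = ((1 + (exp th - 1) *
      (if P i (fupd f i c) then R1 else R0)) * exp (- h i f))%R.
    rewrite /G (@h_predictable i (fupd f i c) f) => [|j Hj]; last first.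
      by rewrite ffunE; case: (j =P i) => // Ej; rewrite Ej ltnn in Hj.
    rewrite Rminus_def exp_plus; congr Rmult.
    by case: (P i _); rewrite ?Rmult_1_r ?Rmult_0_r ?exp_0; ring.
  rewrite (eq_bigr _ (fun c _ => Gfupd c)) -big_distrl /= big_split /= -big_distrr /=.
  rewrite Rsum_indicator (Rsum_const predT) Rmult_1_r.
  by rewrite (eq_card (B := C)).
- by left; apply: exp_pos.
- move=> f Ef; rewrite Rprod_exp; apply: exp_le.
  rewrite big_split /= -big_distrr /= Rsum_indicator Rsum_opp.
  by have := HM f Ef; lra.
Qed.
End ExpCount.

(* The same for a weighted count with deterministic weights in [0, 1] and
   events of conditional probability at most [q]. *)
Section WeightedCount.
Variables (I C : finType) (r : I -> nat) (c0 : C).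
Variables (P : I -> {ffun I -> C} -> bool) (w : I -> R) (q : R).
Hypothesis r_inj : injective r.
Hypothesis P_adapted : forall i (f f' : {ffun I -> C}),
  (forall j, r j <= r i -> f j = f' j) -> P i f = P i f'.
Hypothesis w01 : forall i, (0 <= w i <= 1)%R.
Hypothesis P_rare : forall i f, (INR #|[set c | P i (fupd f i c)]| <= q * INR #|C|)%R.

Lemma card_event_weighted_count_le (E : pred {ffun I -> C}) (M : R) :
  (forall f, E f -> M <= / 2 * \big[Rplus/R0]_(i : I) (w i * (if P i f then R1 else R0))
                       - q * \big[Rplus/R0]_(i : I) w i)%R ->
  (INR #|[set f | E f]| * exp M <= INR #|C| ^ #|I|)%R.
Proof.
move=> HM.
pose G i f := ((1 + w i * (if P i f then R1 else R0)) * exp (- (w i * q)))%R.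
have G_ge0 i f : (0 <= G i f)%R.
  apply: Rmult_le_pos; last by left; apply: exp_pos.
  by have := w01 i; case: (P i f); lra.
apply: (card_event_le (r := r) (G := G)) => //.
- by move=> i f f' H; rewrite /G (P_adapted H).
- move=> i f; rewrite /G -big_distrl /= big_split /= -big_distrr /= Rsum_indicator.
  rewrite (Rsum_const predT) Rmult_1_r (eq_card (B := C)) //.
  set k := INR #|[set _ | _]|.
  have Hk : (INR #|C| + w i * k <= INR #|C| * (1 + w i * q))%R.
    have : (w i * k <= w i * (q * INR #|C|))%R.
      by apply: Rmult_le_compat_l; [have := w01 i; lra | exact: P_rare].
    lra.
  apply: (@Rle_trans _ (INR #|C| * ((1 + w i * q) * exp (- (w i * q))))%R).
    by rewrite -Rmult_assoc; apply: Rmult_le_compat_r; [left; exact: exp_pos | exact: Hk].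
  rewrite -{2}[INR #|C|]Rmult_1_r; apply: Rmult_le_compat_l; first exact: pos_INR.
  exact: one_plus_mul_exp_opp_le1.
- by left; apply: exp_pos.
- move=> f Ef; apply: (@Rle_trans _ (\big[Rmult/R1]_(i : I)
      (exp (w i * (if P i f then R1 else R0) / 2) * exp (- (w i * q))))%R).
    rewrite big_split /= !Rprod_exp -exp_plus; apply: exp_le.
    have -> : \big[Rplus/R0]_(i : I) (w i * (if P i f then R1 else R0) / 2)%R
      = (/ 2 * \big[Rplus/R0]_(i : I) (w i * (if P i f then R1 else R0)))%R.
      by rewrite big_distrr /=; apply: eq_bigr => i _; rewrite /Rdiv Rmult_comm.
    rewrite Rsum_opp -big_distrl /= Rmult_comm.
    by have := HM f Ef; lra.
  apply: Rprod_le => i _; split; first by apply: Rmult_le_pos; left; apply: exp_pos.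
  apply: Rmult_le_compat_r; first by left; apply: exp_pos.
  by apply: exp_half_le; have := w01 i; case: (P i f); lra.
Qed.
End WeightedCount.

Lemma INR_expn a b : INR (expn a b) = (INR a ^ b)%R.
Proof. by elim: b => [|b IH]; rewrite ?expn0 // expnS mult_INR IH. Qed.

Lemma card_sub_val (T : finType) (Y : {set T}) (Q : pred T) :
  #|[set i : {x : T | x \in Y} | Q (val i)]| = #|[set a in Y | Q a]|.
Proof.
rewrite -!sum1_card [RHS](eq_bigl (fun a => (a \in Y) && Q a)) => [|a]; last by rewrite inE.
by rewrite (big_sub_cond Y Q); apply: eq_bigl => i; rewrite inE.
Qed.

(* A coloring of [Y] is a function on the subtype of [Y], extended by
   [None] to a partial coloring of [T]. *)
Section Extend.
Variables (T C : finType) (Y : {set T}).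
Local Notation I := {x : T | x \in Y}.

Definition extend (f : {ffun I -> C}) : {ffun T -> option C} :=
  [ffun v => if insub v is Some y then Some (f y) else None].

Lemma extend_val f (i : I) : extend f (val i) = Some (f i).
Proof. by rewrite ffunE valK. Qed.

Lemma extend_eq_None f v : (extend f v == None) = (v \notin Y).
Proof.
case: (boolP (v \in Y)) => Hv /=; last by rewrite ffunE insubN.
by rewrite -[v]/(val (Sub v Hv : I)) extend_val.
Qed.

Lemma extend_eq (f f' : {ffun I -> C}) v :
  (forall j : I, val j = v -> f j = f' j) -> extend f v = extend f' v.
Proof. by move=> H; rewrite !ffunE; case: insubP => // j _ Ej; rewrite H. Qed.

Lemma extend_fupd (f : {ffun I -> C}) i c v :
  v != val i -> extend (fupd f i c) v = extend f v.
Proof.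
move=> Hv; apply: extend_eq => j Ej; rewrite ffunE; case: (j =P i) => // Eji.
by move: Hv; rewrite -Ej Eji eqxx.
Qed.

Lemma extend_fupd_val (f : {ffun I -> C}) i c : extend (fupd f i c) (val i) = Some c.
Proof. by rewrite extend_val ffunE eqxx. Qed.

Lemma extend_inj : injective extend.
Proof.
move=> f f' E; apply/ffunP => i.
by move: (congr1 (fun h : {ffun T -> option C} => h (val i)) E); rewrite !extend_val => [[]].
Qed.

Lemma extend_mem f : extend f \in colorings_of C Y.
Proof. by rewrite inE; apply/forallP => v; rewrite extend_eq_None negbK. Qed.

Lemma card_colorings_event (c0 : C) (P : pred {ffun T -> option C}) :
  #|[set chi in colorings_of C Y | P chi]| = #|[set f : {ffun I -> C} | P (extend f)]|.
Proof.
rewrite -(card_imset _ extend_inj); apply: eq_card => chi; apply/idP/idP.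
  rewrite inE => /andP [Hc Hp].
  have Echi : chi = extend [ffun y : I => odflt c0 (chi (val y))].
    apply/ffunP => v; rewrite ffunE.
    move: Hc; rewrite inE => /forallP /(_ v) /eqP Hv.
    case: insubP => [j Hj Ej|Hj]; first by rewrite ffunE Ej; case: (chi v) Hv => //; rewrite Hj.
    by apply/eqP; rewrite -[_ == _]negbK Hv.
  by rewrite Echi; apply: imset_f; rewrite inE -Echi.
by case/imsetP => f; rewrite inE => Hf ->; rewrite inE extend_mem.
Qed.

Lemma uprob_le_exp (c0 : C) (P : pred {ffun T -> option C}) (M : R) :
  (INR #|[set f : {ffun I -> C} | P (extend f)]| * exp M <= INR #|C| ^ #|{: I}|)%R ->
  (uprob (colorings_of C Y) P <= exp (- M))%R.
Proof.
move=> H; have := card_colorings_event c0 predT.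
rewrite (_ : [set chi in _ | predT chi] = colorings_of C Y); last first.
  by apply/setP => v; rewrite inE andbT.
rewrite (_ : [set f | _] = setT); last by apply/setP => f; rewrite !inE.
rewrite cardsT card_ffun => Hcard.
rewrite /uprob (card_colorings_event c0) Hcard INR_expn.
have Npos : (0 < INR #|C| ^ #|{: I}|)%R.
  by apply/pow_lt/lt_0_INR/ltP/card_gt0P; exists c0.
set a := INR _ in H *; set b := (INR #|C| ^ _)%R in H Npos *.
have Ha : (a <= b * exp (- M))%R.
  have := exp_Ropp_mul M; have := exp_pos M; have := exp_pos (- M); nra.
apply: (Rmult_le_reg_r b) => //; rewrite /Rdiv Rmult_assoc Rinv_l; lra.
Qed.
End Extend.

Lemma exp_compensator_le (N a p : R) : (0 < N)%R ->
  ((N + a * p) * exp (- (a * p / N)) <= N)%R.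
Proof.
move=> HN; rewrite (_ : N + a * p = N * (1 + a * p / N))%R; last by field; lra.
by rewrite Rmult_assoc; have := one_plus_mul_exp_opp_le1 (a * p / N); nra.
Qed.

Lemma ln2_compensator_le (N p x : R) : (0 < N)%R -> (p <= x)%R ->
  ((N + (exp (ln 2) - 1) * p) * exp (- (x / N)) <= N)%R.
Proof.
move=> HN Hp; rewrite exp_ln; last lra.
apply: Rle_trans (exp_compensator_le 1 x HN).
rewrite (_ : 1 * x = x)%R; last ring.
by apply: Rmult_le_compat_r; [left; exact: exp_pos | lra].
Qed.

Section Events.
Variables (T C : finType) (Y Y0 : {set T}) (S : {set C}) (c0 : C).
Hypothesis Y0Y : Y0 \subset Y.
Local Notation I := {x : T | x \in Y}.
Local Notation N := (INR #|C|).
Local Notation m := #|Y0|.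

Definition colored_in (o : option C) := if o is Some c then c \in S else false.

Definition hits (chi : {ffun T -> option C}) := [set a in Y0 | colored_in (chi a)].

Definition sub_rank (i : I) : nat := enum_rank (val i).

Lemma sub_rank_inj : injective sub_rank.
Proof. by move=> i j /ord_inj /enum_rank_inj /val_inj. Qed.

Lemma card_sub_Y0 (Q : pred T) :
  #|[set i : I | (val i \in Y0) && Q (val i)]| = #|[set a in Y0 | Q a]|.
Proof.
rewrite (card_sub_val Y (fun a => (a \in Y0) && Q a)); apply: eq_card => a; rewrite !inE.
by case: (boolP (a \in Y0)) => Ha; rewrite ?andbF //= (subsetP Y0Y a Ha).
Qed.

Lemma Rsum_sub_Y0 (F : T -> R) :
  \big[Rplus/R0]_(i : I) (if val i \in Y0 then F (val i) else R0)
  = \big[Rplus/R0]_(a in Y0) F a.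
Proof.
rewrite -(big_sub (op := Rplus) Y (fun a => if a \in Y0 then F a else R0)) /=.
rewrite [RHS]big_mkcond /= big_mkcond /=; apply: eq_bigr => a _.
by case: (boolP (a \in Y0)) => H; rewrite ?(subsetP Y0Y a H) //; case: (a \in Y).
Qed.

Lemma uprob_hits_le (th : R) (E : pred {ffun T -> option C}) (M : R) : (0 < N)%R ->
  (forall f : {ffun I -> C}, E (extend f) ->
     M <= th * INR #|hits (extend f)| - (exp th - 1) * (INR #|S| * INR m / N))%R ->
  (uprob (colorings_of C Y) E <= exp (- M))%R.
Proof.
move=> HN HE; apply: (uprob_le_exp c0).
set k := ((exp th - 1) * INR #|S| / N)%R.
apply: (@card_event_exp_count_le I C sub_rank c0
          (fun i f => (val i \in Y0) && colored_in (extend f (val i)))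
          (fun i f => k * (if val i \in Y0 then R1 else R0))%R th sub_rank_inj) => //.
- move=> i f f' H; congr (_ && colored_in _).
  by apply: extend_eq => j Ej; apply: H; rewrite /sub_rank Ej.
- move=> i f; case: (boolP (val i \in Y0)) => Hi /=.
    have -> : #|[set c | colored_in (extend (fupd f i c) (val i))]| = #|S|.
      by apply: eq_card => c; rewrite inE extend_fupd_val.
    by rewrite Rmult_1_r; exact: exp_compensator_le.
  rewrite (_ : [set c | false] = set0) ?cards0; last by apply/setP => c; rewrite inE.
  by rewrite (_ : k * R0 = 0)%R ?Ropp_0 ?exp_0 /=; [lra | ring].
- move=> f Ef; rewrite -big_distrr /= Rsum_indicator.
  have -> : #|[set i : I | val i \in Y0]| = m.
    rewrite (eq_card (B := [set i : I | (val i \in Y0) && true])) => [|i]; last first.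
      by rewrite !inE andbT.
    by rewrite (card_sub_Y0 predT); apply: eq_card => a; rewrite inE andbT.
  rewrite (card_sub_Y0 (fun a => colored_in (extend f a))).
  rewrite (_ : k * INR m = (exp th - 1) * (INR #|S| * INR m / N))%R; first exact: HE.
  by rewrite /k /Rdiv; ring.
Qed.

Definition repeats (rho : T -> nat) (chi : {ffun T -> option C}) :=
  [set a in Y0 | colored_in (chi a) &&
     [exists b, [&& b \in Y0, rho b < rho a & chi b == chi a]]].

Definition earlier_hits (rho : T -> nat) (chi : {ffun T -> option C}) (a : T) :=
  [set b in Y0 | (rho b < rho a) && colored_in (chi b)].

(* A vertex repeats an earlier colour only if it picks one of the at most
   [#|earlier_hits|] colours already used on earlier hits. *)
Lemma uprob_repeats_le (rho : T -> nat) (E : pred {ffun T -> option C}) (M : R) :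
  injective rho -> (0 < N)%R ->
  (forall f : {ffun I -> C}, E (extend f) ->
     M <= ln 2 * INR #|repeats rho (extend f)| - INR m * INR #|hits (extend f)| / N)%R ->
  (uprob (colorings_of C Y) E <= exp (- M))%R.
Proof.
move=> rho_inj HN HE; apply: (uprob_le_exp c0).
have rho_val_inj : injective (fun i : I => rho (val i)) by move=> i j /rho_inj /val_inj.
have extend_eq_before (f f' : {ffun I -> C}) (i : I) :
    (forall j : I, rho (val j) <= rho (val i) -> f j = f' j) ->
    forall b, rho b <= rho (val i) -> extend f b = extend f' b.
  by move=> H b Hb; apply: extend_eq => j Ej; apply: H; rewrite Ej.
apply: (@card_event_exp_count_le I C (fun i => rho (val i)) c0
   (fun i f => (val i \in Y0) && (colored_in (extend f (val i)) &&
      [exists b, [&& b \in Y0, rho b < rho (val i) & extend f b == extend f (val i)]]))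
   (fun i f => if val i \in Y0 then INR #|earlier_hits rho (extend f) (val i)| / N else R0)%R
   (ln 2) rho_val_inj).
- move=> i f f' H; rewrite (extend_eq_before f f' i H (val i)) //.
  congr (_ && (_ && _)); apply: eq_existsb => b.
  case: (ltnP (rho b) (rho (val i))) => Hb; rewrite ?andbF //=.
  by rewrite (extend_eq_before f f' i H b (ltnW Hb)).
- move=> i f f' H; case: (val i \in Y0) => //; congr (INR _ / _)%R; apply: eq_card => b.
  rewrite !inE; case: (ltnP (rho b) (rho (val i))) => Hb; rewrite ?andbF //=.
  by rewrite (@extend_eq _ _ _ f f' b) // => j Ej; apply: H; rewrite Ej.
- move=> i f; case: (boolP (val i \in Y0)) => Hi /=; last first.
    rewrite (_ : [set c | false] = set0) ?cards0; last by apply/setP => c; rewrite inE.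
    by rewrite Rmult_0_r Rplus_0_r Ropp_0 exp_0 Rmult_1_r; lra.
  apply: ln2_compensator_le => //; apply/le_INR/leP.
  apply: leq_trans (leq_imset_card (fun b => odflt c0 (extend f b))
                                   (earlier_hits rho (extend f) (val i))).
  apply/subset_leq_card/subsetP => c; rewrite inE extend_fupd_val /=.
  case/andP => Hc /existsP [b /and3P [Hb Hlt /eqP Eb]].
  have Hne : b != val i by apply: contraTneq Hlt => ->; rewrite ltnn.
  rewrite extend_fupd // in Eb.
  by apply/imsetP; exists b; rewrite ?Eb // inE Hb Hlt Eb.
- move=> f Ef.
  rewrite (card_sub_Y0 (fun a => colored_in (extend f a) &&
      [exists b, [&& b \in Y0, rho b < rho a & extend f b == extend f a]])).
  apply: Rle_trans (HE f Ef) _; apply/Rplus_le_compat_l/Ropp_le_contravar.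
  rewrite (Rsum_sub_Y0 (fun a => INR #|earlier_hits rho (extend f) a| / N)%R).
  apply: (@Rle_trans _ (\big[Rplus/R0]_(a in Y0) (INR #|hits (extend f)| / N))%R).
    apply: Rsum_le => a _; apply: Rmult_le_compat_r; first by left; apply: Rinv_0_lt_compat.
    apply/le_INR/leP/subset_leq_card/subsetP => b; rewrite !inE.
    by case/andP => -> /andP [].
  by rewrite Rsum_const /Rdiv -Rmult_assoc; right.
Qed.

Definition rank_Y0_last (i : I) : nat :=
  (if val i \in Y0 then #|T| else 0) + enum_rank (val i).

Lemma rank_Y0_last_inj : injective rank_Y0_last.
Proof.
move=> i j; rewrite /rank_Y0_last => E; apply: sub_rank_inj; rewrite /sub_rank; move: E.
have Hi := ltn_ord (enum_rank (val i)); have Hj := ltn_ord (enum_rank (val j)).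
case: (val i \in Y0); case: (val j \in Y0); rewrite ?add0n => E //.
- exact: addnI E.
- by move: Hj; rewrite -E ltnNge leq_addr.
- by move: Hi; rewrite E ltnNge leq_addr.
Qed.

Variables (g : rel T) (thr : R).

Definition bad_out (chi : {ffun T -> option C}) (a : T) (col : C) : nat :=
  #|[set u | g a u && [exists b, [&& g u b, b \in Y, b \notin Y0 & chi b == Some col]]]|.

Definition bad_colors (chi : {ffun T -> option C}) (a : T) :=
  [set col in S | ~~ Rleb (INR (bad_out chi a col)) thr].

Definition bad_hits (chi : {ffun T -> option C}) :=
  [set a in Y0 | if chi a is Some col then col \in bad_colors chi a else false].

Lemma bad_out_eq (chi chi' : {ffun T -> option C}) a col :
  (forall b, b \in Y -> b \notin Y0 -> chi b = chi' b) ->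
  bad_out chi a col = bad_out chi' a col.
Proof.
move=> H; apply: eq_card => u; rewrite !inE; congr andb; apply: eq_existsb => b.
by case: (boolP (b \in Y)) => Hb; case: (boolP (b \in Y0)) => Hb0; rewrite ?andbF //= H.
Qed.

(* Revealing [Y :\: Y0] first makes every [bad_colors] set known before the
   vertices of [Y0] are coloured. *)
Lemma uprob_bad_hits_le (E : pred {ffun T -> option C}) (M : R) : (0 < N)%R ->
  (forall f : {ffun I -> C}, E (extend f) ->
     M <= ln 2 * INR #|bad_hits (extend f)|
          - \big[Rplus/R0]_(a in Y0) (INR #|bad_colors (extend f) a| / N))%R ->
  (uprob (colorings_of C Y) E <= exp (- M))%R.
Proof.
move=> HN HE; apply: (uprob_le_exp c0).
have extend_eq_out (f f' : {ffun I -> C}) (i : I) : val i \in Y0 ->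
    (forall j : I, rank_Y0_last j < rank_Y0_last i -> f j = f' j) ->
    forall b, b \in Y -> b \notin Y0 -> extend f b = extend f' b.
  move=> Hi H b Hb Hb0; apply: extend_eq => j Ej; apply: H.
  by rewrite /rank_Y0_last Ej Hi (negbTE Hb0) add0n (leq_trans (ltn_ord _) (leq_addr _ _)).
apply: (@card_event_exp_count_le I C rank_Y0_last c0
   (fun i f => (val i \in Y0) &&
      (if extend f (val i) is Some col then col \in bad_colors (extend f) (val i) else false))
   (fun i f => if val i \in Y0 then INR #|bad_colors (extend f) (val i)| / N else R0)%R
   (ln 2) rank_Y0_last_inj).
- move=> i f f' H; case: (boolP (val i \in Y0)) => Hi //=.
  rewrite (@extend_eq _ _ _ f f' (val i)) => [|j /val_inj ->]; last exact: H.
  case: (extend f' (val i)) => // col; rewrite !inE (@bad_out_eq (extend f) (extend f')) //.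
  by apply: (extend_eq_out f f' i Hi) => j Hj; apply/H/ltnW.
- move=> i f f' H; case: (boolP (val i \in Y0)) => Hi //=.
  congr (INR _ / _)%R; apply: eq_card => col; rewrite !inE.
  by rewrite (@bad_out_eq (extend f) (extend f')) //; apply: (extend_eq_out f f' i Hi).
- move=> i f; case: (boolP (val i \in Y0)) => Hi /=; last first.
    rewrite (_ : [set c | false] = set0) ?cards0; last by apply/setP => c; rewrite inE.
    by rewrite Rmult_0_r Rplus_0_r Ropp_0 exp_0 Rmult_1_r; lra.
  apply: ln2_compensator_le => //; apply/le_INR/leP/subset_leq_card/subsetP => c.
  rewrite inE extend_fupd_val /= !inE (@bad_out_eq (extend (fupd f i c)) (extend f)) //.
  by move=> b _ Hb0; apply: extend_fupd; apply: contraNneq Hb0 => ->.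
- move=> f Ef.
  rewrite (card_sub_Y0 (fun a => if extend f a is Some col
                                  then col \in bad_colors (extend f) a else false)).
  by rewrite (Rsum_sub_Y0 (fun a => INR #|bad_colors (extend f) a| / N)%R); exact: HE.
Qed.
End Events.

Lemma sum_indicator_nat (T : finType) (P : pred T) :
  \sum_(u : T) (if P u then 1 else 0) = #|[set u | P u]|.
Proof. by rewrite -big_mkcond sum1_card; apply: eq_card => u; rewrite inE. Qed.

Lemma exists_le_count (T : finType) (P : pred T) :
  (if [exists u, P u] then 1 else 0) <= \sum_(u : T) (if P u then 1 else 0).
Proof. by case: existsP => [[u Pu]|//]; rewrite (bigD1 u) //= Pu. Qed.

Lemma sum_eq_indicator (C : finType) (S : {set C}) (c : C) :
  \sum_(col in S) (if c == col then 1 else 0) = if c \in S then 1 else 0.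
Proof.
case: (boolP (c \in S)) => Hc.
  by rewrite (bigD1 c) //= eqxx big1 // => col /andP [_ Hne]; rewrite eq_sym (negbTE Hne).
by rewrite big1 // => col Hcol; case: (c =P col) => // E; rewrite E Hcol in Hc.
Qed.

Section TwoPaths.
Variables (T : finType) (g : rel T) (Y0 : {set T}) (d : nat).
Hypothesis g_sym : symmetric g.
Hypothesis deg_le : forall v, deg g v <= d.

Lemma sum_adj v : \sum_(u : T) (if g v u then 1 else 0) = deg g v.
Proof. exact: sum_indicator_nat. Qed.

Lemma sum_adj_mul_le v : \sum_(u : T) (if g v u then d else 0) <= d * d.
Proof.
rewrite (eq_bigr (fun u => (if g v u then 1 else 0) * d)) => [|u _]; last first.
  by case: (g v u); rewrite ?mul1n.
by rewrite -big_distrl /= sum_adj mulnC leq_mul.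
Qed.

Definition two_paths (b : T) : nat :=
  \sum_(a in Y0) \sum_(u : T) (if g a u && g u b then 1 else 0).

Lemma two_paths_le b : two_paths b <= d * d.
Proof.
apply: leq_trans (_ : _ <= \sum_(a : T) \sum_(u : T) (if g u a && g u b then 1 else 0)) _.
  rewrite [X in _ <= X](bigID (fun a => a \in Y0)) /=; apply: leq_trans (leq_addr _ _).
  by apply: leq_sum => a _; apply: leq_sum => u _; rewrite (g_sym a u).
rewrite exchange_big /=; apply: leq_trans (sum_adj_mul_le b).
apply: leq_sum => u _; rewrite (g_sym b u); case: (boolP (g u b)) => /= H.
  by apply: leq_trans (deg_le u); rewrite -(sum_adj u); apply: leq_sum => a _; rewrite andbT.
by rewrite big1 // => a _; rewrite andbF.
Qed.

Lemma sum_two_paths_le : \sum_(b : T) two_paths b <= #|Y0| * d * d.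
Proof.
rewrite /two_paths exchange_big /= -mulnA -sum_nat_const; apply: leq_sum => a _.
rewrite exchange_big /=; apply: leq_trans (sum_adj_mul_le a).
apply: leq_sum => u _; case: (boolP (g a u)) => /= H; last by rewrite big1.
by apply: leq_trans (deg_le u); rewrite -(sum_adj u); apply: leq_sum => b _; rewrite (g_sym u b).
Qed.
End TwoPaths.

(* Each [u] counted by [bad_out chi a col] is the middle of a path from [a] to
   a vertex of [Y :\: Y0] coloured [col]. *)
Lemma sum_bad_out_le (T C : finType) (g : rel T) (Y Y0 : {set T}) (S : {set C})
    (chi : {ffun T -> option C}) :
  \sum_(a in Y0) \sum_(col in S) bad_out Y Y0 g chi a col <=
  \sum_(b : T)
    (if [&& b \in Y, b \notin Y0 & colored_in S (chi b)] then two_paths g Y0 b else 0).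
Proof.
apply: leq_trans (_ : _ <= \sum_(a in Y0) \sum_(u : T) \sum_(b : T)
   (if [&& g a u, g u b, b \in Y, b \notin Y0 & colored_in S (chi b)] then 1 else 0)) _.
  apply: leq_sum => a _.
  apply: leq_trans (_ : _ <= \sum_(col in S) \sum_(u : T) \sum_(b : T)
     (if g a u && [&& g u b, b \in Y, b \notin Y0 & chi b == Some col] then 1 else 0)) _.
    apply: leq_sum => col _; rewrite /bad_out -sum_indicator_nat; apply: leq_sum => u _.
    case: (g a u) => //=.
    exact: (exists_le_count (fun b => [&& g u b, b \in Y, b \notin Y0 & chi b == Some col])).
  rewrite exchange_big /=; apply: leq_sum => u _.
  rewrite exchange_big /=; apply: leq_sum => b _.
  case: (boolP [&& g a u, g u b, b \in Y & b \notin Y0]) => [/and4P [-> -> -> ->]|H] /=.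
    case: (chi b) => [c|] /=; last by rewrite big1_eq.
    by rewrite (eq_bigr (fun col => if c == col then 1 else 0)) ?sum_eq_indicator.
  rewrite big1 // => col _.
  by move: H; case: (g a u); case: (g u b); case: (b \in Y); case: (b \in Y0).
rewrite (eq_bigr (fun a => \sum_(b : T) \sum_(u : T)
    (if [&& g a u, g u b, b \in Y, b \notin Y0 & colored_in S (chi b)] then 1 else 0)));
  last by move=> a _; exact: exchange_big.
rewrite exchange_big /=; apply: leq_sum => b _; rewrite /two_paths.
case: [&& b \in Y, b \notin Y0 & colored_in S (chi b)].
  by apply: leq_sum => a _; apply: leq_sum => u _; rewrite andbT.
by rewrite big1 // => a _; rewrite big1 // => u _; rewrite !andbF.
Qed.

Lemma Rdiv_le_l (a b c : R) : (0 < b)%R -> (a <= c * b)%R -> (a / b <= c)%R.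
Proof.
move=> Hb H; apply: (Rmult_le_reg_r b) => //.
by rewrite /Rdiv Rmult_assoc Rinv_l ?Rmult_1_r //; lra.
Qed.

Section OutsideWeight.
Variables (T C : finType) (g : rel T) (Y Y0 : {set T}) (S : {set C}) (c0 : C) (d : nat).
Hypothesis g_sym : symmetric g.
Hypothesis deg_le : forall v, deg g v <= d.
Hypothesis d_gt0 : 0 < d.
Local Notation I := {x : T | x \in Y}.
Local Notation N := (INR #|C|).
Local Notation m := #|Y0|.

Let dd_gt0 : (0 < INR d * INR d)%R.
Proof. have : (0 < INR d)%R by apply/lt_0_INR/ltP. nra. Qed.

Definition two_path_weight (b : T) : R := (INR (two_paths g Y0 b) / (INR d * INR d))%R.

(* Normalised so that its mean is at most [#|S| * #|Y0| / #|C|], the mean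
   number of hits. *)
Definition outside_weight (chi : {ffun T -> option C}) : R :=
  \big[Rplus/R0]_(b : T)
    (if [&& b \in Y, b \notin Y0 & colored_in S (chi b)] then two_path_weight b else R0).

Lemma two_path_weight_01 b : (0 <= two_path_weight b <= 1)%R.
Proof.
split; first by apply: Rmult_le_pos; [exact: pos_INR | left; exact: Rinv_0_lt_compat dd_gt0].
apply: Rdiv_le_l; first exact: dd_gt0.
by rewrite Rmult_1_l -mult_INR; apply/le_INR/leP; exact: two_paths_le.
Qed.

Lemma sum_two_path_weight_le : (\big[Rplus/R0]_(b : T) two_path_weight b <= INR m)%R.
Proof.
rewrite /two_path_weight -big_distrl /= -INR_sum; apply: Rdiv_le_l; first exact: dd_gt0.
by rewrite -!mult_INR; apply/le_INR/leP; rewrite !multE mulnA; exact: sum_two_paths_le.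
Qed.

Lemma uprob_outside_weight_le (E : pred {ffun T -> option C}) (M : R) : (0 < N)%R ->
  (forall f : {ffun I -> C}, E (extend f) ->
     M <= / 2 * outside_weight (extend f) - INR #|S| / N * INR m)%R ->
  (uprob (colorings_of C Y) E <= exp (- M))%R.
Proof.
move=> HN HE; apply: (uprob_le_exp c0).
pose w (i : I) := if val i \in Y0 then R0 else two_path_weight (val i).
apply: (@card_event_weighted_count_le I C (@sub_rank T Y) c0
          (fun i f => colored_in S (extend f (val i))) w (INR #|S| / N)%R (@sub_rank_inj T Y)).
- move=> i f f' H; congr colored_in; apply: extend_eq => j /val_inj ->; exact: H.
- by move=> i; rewrite /w; case: (val i \in Y0); [lra | exact: two_path_weight_01].
- move=> i f; rewrite (_ : [set c | _] = S); last by apply/setP => c; rewrite inE extend_fupd_val.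
  by right; field; lra.
- move=> f Ef; apply: Rle_trans (HE f Ef) _.
  have -> : outside_weight (extend f) = \big[Rplus/R0]_(i : I)
      (w i * (if colored_in S (extend f (val i)) then R1 else R0))%R.
    rewrite /outside_weight (bigID (fun b => b \in Y)) /= [X in (_ + X)%R]big1; last first.
      by move=> b /negbTE ->.
    rewrite Rplus_0_r (big_sub (op := Rplus) Y) /=; apply: eq_bigr => i _.
    rewrite /w (valP i) /=; case: (val i \in Y0) => /=; first ring.
    by case: (colored_in S _); ring.
  have Hw : (\big[Rplus/R0]_(i : I) w i <= INR m)%R.
    apply: Rle_trans sum_two_path_weight_le.
    rewrite -(big_sub (op := Rplus) Y (fun b => if b \in Y0 then R0 else two_path_weight b)).
    rewrite big_mkcond /=; apply: Rsum_le => b _.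
    by have := two_path_weight_01 b; case: (b \in Y); case: (b \in Y0); lra.
  have Hq : (0 <= INR #|S| / N)%R.
    by apply: Rmult_le_pos; [exact: pos_INR | left; exact: Rinv_0_lt_compat].
  by apply/Rplus_le_compat_l/Ropp_le_contravar/Rmult_le_compat_l.
Qed.

Variable thr : R.

(* Double counting: a colour is bad for [a] only if it accounts for more than
   [thr] paths of length two from [a]. *)
Lemma sum_bad_colors_le (chi : {ffun T -> option C}) :
  (\big[Rplus/R0]_(a in Y0) (INR #|bad_colors Y Y0 S g thr chi a| * thr)
     <= INR d * INR d * outside_weight chi)%R.
Proof.
apply: (@Rle_trans _ (\big[Rplus/R0]_(a in Y0) \big[Rplus/R0]_(col in S)
                        INR (bad_out Y Y0 g chi a col))%R).
  apply: Rsum_le => a _.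
  rewrite (bigID (fun col => col \in bad_colors Y Y0 S g thr chi a)) /=.
  rewrite -[X in (X <= _)%R]Rplus_0_r; apply: Rplus_le_compat; last first.
    by apply: Rsum_ge0 => *; exact: pos_INR.
  apply: (@Rle_trans _ (\big[Rplus/R0]_(col in S | col \in bad_colors Y Y0 S g thr chi a) thr)).
    rewrite Rsum_const; right; congr (INR _ * _)%R; apply: eq_card => col.
    rewrite (_ : col \in _ = (col \in S) && (col \in bad_colors Y Y0 S g thr chi a)) //.
    by rewrite !inE; case: (col \in S).
  apply: Rsum_le => col /andP [_]; rewrite inE => /andP [_] /Rleb_false; lra.
rewrite (eq_bigr (fun a => INR (\sum_(col in S) bad_out Y Y0 g chi a col))); last first.
  by move=> a _; rewrite INR_sum.
rewrite -INR_sum; apply: Rle_trans (le_INR _ _ (leP (sum_bad_out_le g Y Y0 S chi))) _.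
rewrite INR_sum /outside_weight big_distrr /=; apply: Rsum_le => b _.
case: (_ && _); last by right; simpl; ring.
rewrite /two_path_weight; right; field.
by apply: not_0_INR; apply/eqP; rewrite -lt0n.
Qed.
End OutsideWeight.

Lemma exp1_ge : (5 / 2 <= exp 1)%R.
Proof.
have -> : exp 1 = (exp (1 / 8) ^ 8)%R.
  rewrite -(exp_ln (exp (1 / 8) ^ 8)); last by apply: pow_lt; exact: exp_pos.
  by rewrite ln_pow ?ln_exp; [congr exp; simpl; field | exact: exp_pos].
apply: (@Rle_trans _ ((1 + 1 / 8) ^ 8)%R); first by simpl; lra.
by apply: pow_incr; have := exp_ineq1_le (1 / 8); lra.
Qed.

Lemma exp_m1_le : (exp (-1) <= 2 / 5)%R.
Proof.
have : (exp 1 * exp (-1) = 1)%R by exact: exp_Ropp_mul.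
have := exp1_ge; have := exp_pos (-1); nra.
Qed.

Lemma six_exp_m2t_le t : (2 <= t)%R -> (6 * exp (- (2 * t)) <= exp (- t))%R.
Proof.
move=> Ht.
have E2 : (6 <= exp 2)%R.
  by rewrite (_ : 2 = 1 + 1)%R ?exp_plus; [have := exp1_ge; nra | ring].
have Et : (6 <= exp t)%R by apply: Rle_trans E2 (exp_le Ht).
rewrite (_ : - (2 * t) = - t + - t)%R ?exp_plus; last ring.
have := exp_Ropp_mul t; have := exp_pos (- t); nra.
Qed.

Lemma uprob_mono (S : finType) (Om : {set S}) (P1 P2 : pred S) :
  (forall s, s \in Om -> P1 s -> P2 s) -> (uprob Om P1 <= uprob Om P2)%R.
Proof.
move=> H; rewrite /uprob /Rdiv; apply: Rmult_le_compat_r.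
  by case: (posnP #|Om|) => [->|/ltP/lt_0_INR/Rinv_0_lt_compat]; rewrite ?Rinv_0 /=; lra.
apply/le_INR/leP/subset_leq_card/subsetP => s; rewrite !inE.
by case/andP => Hs Hp; rewrite Hs (H s Hs Hp).
Qed.

Lemma uprob_union_le (S : finType) (Om : {set S}) (P1 P2 : pred S) (a b : R) :
  (uprob Om P1 <= a)%R -> (uprob Om P2 <= b)%R ->
  (uprob Om (fun s => P1 s || P2 s) <= a + b)%R.
Proof.
move=> H1 H2; apply: Rle_trans (Rplus_le_compat _ _ _ _ H1 H2).
rewrite /uprob /Rdiv -Rmult_plus_distr_r; apply: Rmult_le_compat_r.
  by case: (posnP #|Om|) => [->|/ltP/lt_0_INR/Rinv_0_lt_compat]; rewrite ?Rinv_0 /=; lra.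
rewrite -plus_INR; apply/le_INR/leP/(leq_trans _ (leq_card_setU _ _))/subset_leq_card/subsetP.
by move=> s; rewrite !inE; case/andP => -> /orP [] ->; rewrite ?orbT.
Qed.

Lemma mindeg_le (C : finType) (eG : rel C) (c : C) : mindeg eG <= deg eG c.
Proof.
rewrite /mindeg; elim: (index_enum C) (mem_index_enum c) => [|a r IH] //.
by rewrite inE big_cons => /orP [/eqP <-|/IH]; [exact: geq_minl | exact: leq_trans (geq_minr _ _)].
Qed.

Lemma bipartition_nbhd_sub (T : finType) (g : rel T) (X Y : {set T}) x :
  bipartition g X Y -> x \in X -> nbhd g x \subset Y.
Proof.
case=> _ [XY [X_stable _]] Hx; apply/subsetP => u; rewrite inE => Hxu.
have : u \in X :|: Y by rewrite XY inE.
by rewrite inE => /orP [HuX|//]; move: (X_stable x u Hx HuX); rewrite Hxu.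
Qed.

Definition rank_fwd (T : finType) (v : T) : nat := enum_rank v.
Definition rank_bwd (T : finType) (v : T) : nat := #|T| - enum_rank v.

Lemma rank_fwd_inj (T : finType) : injective (@rank_fwd T).
Proof. by move=> u v /ord_inj /enum_rank_inj. Qed.

Lemma rank_bwd_inj (T : finType) : injective (@rank_bwd T).
Proof.
move=> u v; rewrite /rank_bwd => E; apply: rank_fwd_inj; rewrite /rank_fwd.
have Hu := ltn_ord (enum_rank u); have Hv := ltn_ord (enum_rank v).
by have := congr1 (fun k => #|T| - k) E; rewrite !subKn // ltnW.
Qed.

(* A hit [a] not counted by [W] shares its colour with an earlier or a later
   hit, or has more than [d / sqrt alpha] bad neighbours; in the latter case
   the colour-sharing vertices behind them lie outside [N(x)], since the
   colour of [a] is unique in [N(x)]. *)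
Lemma hits_le_W_add (T C : finType) (g : rel T) (eG : rel C) (Y : {set T}) x c
    (alpha : R) (d : nat) (chi : {ffun T -> option C}) :
  nbhd g x \subset Y -> chi \in colorings_of C Y ->
  #|hits (nbhd g x) (nbhd eG c) chi| <=
     W eG g alpha d chi x c + #|repeats (nbhd g x) (nbhd eG c) (@rank_fwd T) chi|
     + #|repeats (nbhd g x) (nbhd eG c) (@rank_bwd T) chi|
     + #|bad_hits Y (nbhd g x) (nbhd eG c) g (INR d / sqrt alpha) chi|.
Proof.
move=> Y0Y Hchi.
set Y0 := nbhd g x; set S := nbhd eG c; set thr := (INR d / sqrt alpha)%R.
set Wset := [set y in Y0 | match chi y with
      | Some col => [&& [forall y', (y' \in Y0) ==> (chi y' == Some col) ==> (y' == y)],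
                        Rleb (INR (Bad g chi y)) thr & eG c col]
      | None => false end].
have Hcol v : (chi v != None) = (v \in Y) by move: Hchi; rewrite inE => /forallP /(_ v) /eqP.
rewrite (_ : W eG g alpha d chi x c = #|Wset|) //.
apply: leq_trans (_ : _ <= #|Wset :|: repeats Y0 S (@rank_fwd T) chi
                     :|: repeats Y0 S (@rank_bwd T) chi :|: bad_hits Y Y0 S g thr chi|) _.
  apply/subset_leq_card/subsetP => a; rewrite inE => /andP [Ha].
  case Hc: (chi a) => [col|] // HcolS; have {}HcolS : col \in S := HcolS.
  rewrite !in_setU.
  case: (boolP (a \in repeats Y0 S (@rank_fwd T) chi)) => H1; rewrite ?orbT //.
  case: (boolP (a \in repeats Y0 S (@rank_bwd T) chi)) => H2; rewrite ?orbT //.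
  case: (boolP (a \in bad_hits Y Y0 S g thr chi)) => H3; rewrite ?orbT // !orbF.
  have col_uniq y' : y' \in Y0 -> chi y' = Some col -> y' = a.
    move=> Hy' Ey'; apply/eqP/negPn/negP => Hne.
    case: (ltngtP (rank_fwd y') (rank_fwd a)) => Hlt.
    - move/negP: H1; apply; rewrite inE Ha Hc /= HcolS /=.
      by apply/existsP; exists y'; rewrite Hy' Hlt Ey' eqxx.
    - move/negP: H2; apply; rewrite inE Ha Hc /= HcolS /=.
      apply/existsP; exists y'; rewrite Hy' Ey' eqxx andbT /=.
      by rewrite /rank_bwd ltn_sub2l //; exact: ltn_ord.
    - by move: Hne; rewrite (rank_fwd_inj Hlt) eqxx.
  rewrite inE Ha Hc /=; apply/and3P; split.
  - apply/forallP => y'; apply/implyP => Hy'; apply/implyP => /eqP Ey'.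
    by rewrite (col_uniq y' Hy' Ey').
  - have /RlebP HB : Rleb (INR (bad_out Y Y0 g chi a col)) thr.
      by move: H3; rewrite inE Ha Hc /= inE HcolS negbK.
    apply/RlebP; apply: Rle_trans HB; apply/le_INR/leP/subset_leq_card/subsetP => u.
    rewrite !inE => /andP [Hau /existsP [v' /and4P [Hv'u Hne Hnone /eqP Ev']]].
    rewrite Hau /=; apply/existsP; exists v'.
    rewrite inE in Hv'u; rewrite Hv'u -Hcol Hnone /= Ev' Hc eqxx andbT.
    by apply: contra Hne => Hv'0; apply/eqP/col_uniq; rewrite // Ev'.
  - by move: HcolS; rewrite inE.
apply: leq_trans (leq_card_setU _ _) _; rewrite leq_add2r.
apply: leq_trans (leq_card_setU _ _) _; rewrite leq_add2r.
exact: leq_card_setU.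
Qed.

Section LowerTail.
Variables (C : finType) (eG : rel C) (T : finType) (g : rel T) (Y : {set T}).
Variables (x : T) (c : C) (alpha : R) (d : nat).
Hypothesis alpha_ge : (1000000 <= alpha)%R.
Hypothesis card_C : INR #|C| = (alpha * INR d)%R.
Hypothesis d_gt0 : 0 < d.
Hypothesis g_sym : symmetric g.
Hypothesis deg_le : forall v, deg g v <= d.
Hypothesis nbhd_sub : nbhd g x \subset Y.
Hypothesis deg_x_ge : d <= 2 * deg g x.

Local Notation Y0 := (nbhd g x).
Local Notation S := (nbhd eG c).
Local Notation N := (INR #|C|).
Local Notation m := (INR #|Y0|).
Local Notation delta := (INR (mindeg eG)).
Local Notation thr := (INR d / sqrt alpha)%R.
Local Notation uP := (uprob (colorings_of C Y)).

Let d_pos : (0 < INR d)%R. Proof. exact/lt_0_INR/ltP. Qed.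
Let N_pos : (0 < N)%R. Proof. by rewrite card_C; apply: Rmult_lt_0_compat; lra. Qed.

Let Q := (INR #|S| * m / N)%R.

Let m_ge : (INR d <= 2 * m)%R.
Proof. by have := le_INR _ _ (leP deg_x_ge); rewrite mult_INR. Qed.

Let delta_le_S : (delta <= INR #|S|)%R.
Proof. exact/le_INR/leP/mindeg_le. Qed.

Let Q_ge : (delta / (2 * alpha) <= Q)%R.
Proof.
rewrite /Q card_C (_ : delta / (2 * alpha) = delta * INR d / 2 / (alpha * INR d))%R;
  last by field; lra.
apply: Rmult_le_compat_r; first by left; rewrite -card_C; exact: Rinv_0_lt_compat.
by have := m_ge; have := delta_le_S; have := d_pos; have := pos_INR (mindeg eG); nra.
Qed.

Let Q_ge0 : (0 <= Q)%R.
Proof.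
apply: Rle_trans Q_ge; apply: Rmult_le_pos; first exact: pos_INR.
by left; apply: Rinv_0_lt_compat; lra.
Qed.

Let m_div_N_le : (m / N <= / 1000000)%R.
Proof.
have m_le : (m <= INR d)%R by apply/le_INR/leP/deg_le.
apply: Rdiv_le_l => //; rewrite card_C.
have : (1 <= / 1000000 * alpha)%R.
  by apply: (Rmult_le_reg_l 1000000); [lra | rewrite -Rmult_assoc Rinv_r; lra].
by have := pos_INR #|Y0|; nra.
Qed.

Let threshold_le : (delta / (alpha * INR d) * INR (deg g x) / 2 <= Q / 2)%R.
Proof.
rewrite -card_C /Q /Rdiv.
apply: (@Rle_trans _ (delta * INR (deg g x) * / N * / 2)); first by right; ring.
apply: Rmult_le_compat_r; first lra.
apply: Rmult_le_compat_r; first by left; apply: Rinv_0_lt_compat.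
by apply: Rmult_le_compat_r; [exact: pos_INR | exact: delta_le_S].
Qed.

Let hitsR chi := INR #|hits Y0 S chi|.

Let few_hits chi := Rleb (hitsR chi) (11 / 20 * Q).
Let many_hits chi := ~~ Rleb (hitsR chi) (3 * Q).
Let many_repeats rho chi :=
  Rleb (hitsR chi) (3 * Q) && Rleb (Q / 100) (INR #|repeats Y0 S rho chi|).
Let heavy_outside chi := ~~ Rleb (outside_weight g Y Y0 S d chi) (4 * Q).
Let many_bad_hits chi :=
  Rleb (outside_weight g Y Y0 S d chi) (4 * Q) &&
  Rleb (Q / 50) (INR #|bad_hits Y Y0 S g thr chi|).

Let exceptional chi :=
  [|| few_hits chi, many_hits chi, many_repeats (@rank_fwd T) chi,
      many_repeats (@rank_bwd T) chi, heavy_outside chi | many_bad_hits chi].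

(* Outside these events [W >= (11/20 - 1/100 - 1/100 - 1/50) Q > Q / 2]. *)
Let W_small_exceptional chi : chi \in colorings_of C Y ->
  Rleb (INR (W eG g alpha d chi x c)) (delta / (alpha * INR d) * INR (deg g x) / 2) ->
  exceptional chi.
Proof.
move=> Hchi /RlebP HW.
have := le_INR _ _ (leP (@hits_le_W_add _ _ g eG Y x c alpha d chi nbhd_sub Hchi)).
rewrite !plus_INR /exceptional /few_hits /many_hits /many_repeats /heavy_outside /many_bad_hits.
case: (RlebP (hitsR chi) (11 / 20 * Q)) => //= HA1.
case: (RlebP (hitsR chi) (3 * Q)) => //= HA2.
case: (RlebP (Q / 100) _) => //= HR1; case: (RlebP (Q / 100) _) => //= HR2.
case: (RlebP (outside_weight _ _ _ _ _ _) _) => //= HT.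
case: (RlebP (Q / 50) _) => //= HB.
by have := threshold_le; rewrite /hitsR in HA1; lra.
Qed.

Let uprob_few_hits_le : (uP few_hits <= exp (- (Q / 500)))%R.
Proof.
apply: Rle_trans (@uprob_hits_le T C Y Y0 S c nbhd_sub (-1) few_hits (Q / 20) N_pos _) _.
  move=> f /RlebP Hf; rewrite -/Q.
  have := Q_ge0; have := exp_m1_le; have := pos_INR #|hits Y0 S (extend f)|.
  by rewrite /hitsR in Hf; nra.
by apply: exp_le; lra.
Qed.

Let uprob_many_hits_le : (uP many_hits <= exp (- (Q / 500)))%R.
Proof.
apply: Rle_trans (@uprob_hits_le T C Y Y0 S c nbhd_sub (ln 2) many_hits (Q / 2) N_pos _) _.
  move=> f /Rleb_false Hf; rewrite -/Q exp_ln; last lra.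
  have := ln_lt_2; have := pos_INR #|hits Y0 S (extend f)|; rewrite /hitsR in Hf; nra.
by apply: exp_le; lra.
Qed.

Let uprob_many_repeats_le rho : injective rho ->
  (uP (many_repeats rho) <= exp (- (Q / 500)))%R.
Proof.
move=> rho_inj.
apply: Rle_trans (@uprob_repeats_le T C Y Y0 S c nbhd_sub rho _ (Q / 500) rho_inj N_pos _) _;
  last lra.
move=> f /andP [/RlebP HA /RlebP HR]; rewrite /hitsR in HA.
rewrite (_ : m * _ / N = m / N * INR #|hits Y0 S (extend f)|)%R; last by rewrite /Rdiv; ring.
have := ln_lt_2; have := m_div_N_le; have := pos_INR #|hits Y0 S (extend f)|.
have : (0 <= m / N)%R by apply: Rmult_le_pos; [exact: pos_INR | left; exact: Rinv_0_lt_compat].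
nra.
Qed.

Let uprob_heavy_outside_le : (uP heavy_outside <= exp (- (Q / 500)))%R.
Proof.
apply: Rle_trans (@uprob_outside_weight_le T C g Y Y0 S c d g_sym deg_le d_gt0
                    heavy_outside Q N_pos _) _.
  move=> f /Rleb_false Hf.
  by rewrite (_ : INR #|S| / N * m = Q)%R; [lra | rewrite /Q /Rdiv; ring].
by apply: exp_le; lra.
Qed.

(* The bad colours of all hits together have mass at most [4 Q / sqrt alpha]
   when the outside weight is at most [4 Q]. *)
Let uprob_many_bad_hits_le : (uP many_bad_hits <= exp (- (Q / 500)))%R.
Proof.
have sqrt_alpha_ge : (1000 <= sqrt alpha)%R.
  by rewrite -(sqrt_square 1000); [apply: sqrt_le_1_alt; lra | lra].
apply: Rle_trans (@uprob_bad_hits_le T C Y Y0 S c nbhd_sub g thr _ (Q / 500) N_pos _) _;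
  last lra.
move=> f /andP [/RlebP HT /RlebP HB].
set BC := \big[Rplus/R0]_(a in Y0) (INR #|bad_colors Y Y0 S g thr (extend f) a| / N)%R.
have BC_ge0 : (0 <= BC)%R.
  apply: Rsum_ge0 => a _; apply: Rmult_le_pos; first exact: pos_INR.
  by left; apply: Rinv_0_lt_compat.
have BC_eq : (BC * (INR d * INR d * sqrt alpha) =
    \big[Rplus/R0]_(a in Y0) (INR #|bad_colors Y Y0 S g thr (extend f) a| * thr))%R.
  rewrite /BC big_distrl /=; apply: eq_bigr => a _.
  rewrite card_C -{2}(sqrt_sqrt alpha); last lra.
  by field; split; lra.
have BC_le : (BC * sqrt alpha <= 4 * Q)%R.
  apply: (Rmult_le_reg_l (INR d * INR d)); first nra.
  rewrite (_ : INR d * INR d * (BC * sqrt alpha) = BC * (INR d * INR d * sqrt alpha))%R;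
    last ring.
  rewrite BC_eq; apply: Rle_trans (sum_bad_colors_le g Y Y0 S d_gt0 thr (extend f)) _.
  by apply: Rmult_le_compat_l; nra.
have := ln_lt_2; have := pos_INR #|bad_hits Y Y0 S g thr (extend f)|.
have : (BC * 1000 <= BC * sqrt alpha)%R by apply: Rmult_le_compat_l.
nra.
Qed.

Lemma uprob_W_small_le :
  (uP (fun chi => Rleb (INR (W eG g alpha d chi x c))
                       (delta / (alpha * INR d) * INR (deg g x) / 2))
   <= 6 * exp (- (delta / (1000 * alpha))))%R.
Proof.
apply: Rle_trans (uprob_mono W_small_exceptional) _; rewrite /exceptional.
apply: (@Rle_trans _ (6 * exp (- (Q / 500)))); last first.
  apply/Rmult_le_compat_l/exp_le; first lra.
  by rewrite (_ : delta / (1000 * alpha) = delta / (2 * alpha) / 500)%R; [lra | field; lra].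
rewrite (_ : 6 * _ = exp (- (Q / 500)) + (exp (- (Q / 500)) + (exp (- (Q / 500)) +
    (exp (- (Q / 500)) + (exp (- (Q / 500)) + exp (- (Q / 500)))))))%R; last ring.
apply: uprob_union_le; first exact: uprob_few_hits_le.
apply: uprob_union_le; first exact: uprob_many_hits_le.
apply: uprob_union_le; first exact/uprob_many_repeats_le/rank_fwd_inj.
apply: uprob_union_le; first exact/uprob_many_repeats_le/rank_bwd_inj.
exact: uprob_union_le uprob_heavy_outside_le uprob_many_bad_hits_le.
Qed.
End LowerTail.

Lemma le_Rpower_of_root_lt (a b eps : R) : (0 < eps)%R -> (0 < a)%R ->
  (Rpower a (/ eps) < b)%R -> (a <= Rpower b eps)%R.
Proof.
move=> eps_gt0 a_gt0 Hb.
rewrite -{1}[a]Rpower_1 // -(Rinv_l eps) -?Rpower_mult; last lra.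
by apply: Rle_Rpower_l; [lra | split; [exact: exp_pos | lra]].
Qed.

Theorem lemma8 :
  forall eps beta : R, (0 < eps)%R -> (0 < beta)%R ->
  exists alpha0 : R, forall alpha : R, (alpha0 <= alpha)%R ->
  exists K : R, (0 < K)%R /\
  exists d0 : nat, forall d : nat, (d0 <= d)%N ->
  forall (C : finType) (eG : rel C), simple_graph eG ->
  INR #|C| = (alpha * INR d)%R ->
  (INR (maxdeg eG) <= beta * INR (mindeg eG))%R ->
  (Rpower (INR d) eps < INR (mindeg eG))%R ->
  forall (T : finType) (g : rel T) (X Y : {set T}),
  simple_graph g -> bipartition g X Y ->
  (forall v : T, (deg g v <= d)%N) ->
  forall x : T, x \in X -> (d <= 2 * deg g x)%N ->
  forall c : C,
  (uprob (colorings_of C Y)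
     (fun chi => Rleb (INR (W eG g alpha d chi x c))
                      (INR (mindeg eG) / (alpha * INR d) * INR (deg g x) / 2))
   <= exp (- (K * INR (mindeg eG))))%R.
Proof.
move=> eps beta eps_gt0 _; exists 1000000%R => alpha alpha_ge.
exists (/ (2000 * alpha))%R; split; first by apply: Rinv_0_lt_compat; lra.
have [d0 Hd0] := INR_unbounded (Rpower (4000 * alpha) (/ eps)).
exists d0 => d d0_le C eG _ card_C _ delta_gt T g X Y [g_sym _] bip deg_le x Hx deg_x_ge c.
have d_large : (Rpower (4000 * alpha) (/ eps) < INR d)%R.
  by apply: Rlt_le_trans Hd0 (le_INR _ _ (leP d0_le)).
have d_gt0 : 0 < d.
  rewrite lt0n; apply/eqP => d_eq0; move: d_large; rewrite d_eq0 /Rpower /=.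
  by have := exp_pos (/ eps * ln (4000 * alpha)); lra.
have delta_ge : (4000 * alpha <= INR (mindeg eG))%R.
  by apply: Rle_trans (Rlt_le _ _ delta_gt); apply: le_Rpower_of_root_lt => //; lra.
apply: Rle_trans (uprob_W_small_le eG c alpha_ge card_C d_gt0 g_sym deg_le
                   (bipartition_nbhd_sub bip Hx) deg_x_ge) _.
rewrite (_ : INR (mindeg eG) / (1000 * alpha) = 2 * (/ (2000 * alpha) * INR (mindeg eG)))%R;
  last by field; lra.
apply: six_exp_m2t_le.
rewrite (_ : 2 = / (2000 * alpha) * (4000 * alpha))%R; last by field; lra.
by apply: Rmult_le_compat_l => //; left; apply: Rinv_0_lt_compat; lra.
Qed.
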